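(* Let $\gamma:=2\Delta\lambda\max\{\lambda,\mu\}$. Then for all $\mathbf x\in\mathbb R^p$, $\mathbf b\in\mathbb R^V$, $\mathbf w\in\mathbb R^E$ and all nodes $v\in V$ of depth $t$, $$|f_{\mathfrak A,v}(\mathbf x,\mathbf w,\mathbf b)|\le\gamma^t(\|\mathbf w\|_\infty+1)^t(\|\mathbf x\|_\infty+\|\mathbf b\|_\infty+1).$$
   Context: $\mathfrak A=(V,E,(\mathfrak a_v)_{v\in V})$ is an FNN architecture: $(V,E)$ is a finite dag and each $\mathfrak a_v:\mathbb R\to\mathbb R$ is Lipschitz continuous. The sources are the input nodes $X_1,\dots,X_p$, the sinks the output nodes $Y_1,\dots,Y_q$. For $\mathbf x\in\mathbb R^p$, $\mathbf w=(w_e)_{e\in E}$, $\mathbf b=(b_v)_{v\in V}$: $f_{\mathfrak A,X_i}(\mathbf x,\mathbf w,\mathbf b)=x_i$ and, for non-input $v$, $f_{\mathfrak A,v}(\mathbf x,\mathbf w,\mathbf b)=\mathfrak a_v\big(b_v+\sum_{u:uv\in E}f_{\mathfrak A,u}(\mathbf x,\mathbf w,\mathbf b)\,w_{uv}\big)$; $\mathfrak A(\mathbf x,\mathbf w,\mathbf b)=(f_{\mathfrak A,Y_1},\dots,f_{\mathfrak A,Y_q})(\mathbf x,\mathbf w,\mathbf b)$. The depth of a node is the length of the longest path from a source to it; $d$ is the depth of the dag (maximum depth of a sink); $\Delta$ is the maximum in-degree, and it is assumed that $\Delta\ge1$. $\lambda\in\mathbb N_{>0}$ is a Lipschitz constant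 of every $\mathfrak a_v$, and $\mu:=\max_{v\in V}\lceil|\mathfrak a_v(0)|\rceil$. Norms are $\ell_\infty$. *)

From HB Require Import structures.
From mathcomp Require Import all_boot all_order all_algebra.
From mathcomp Require Import reals.
Set Implicit Arguments. Unset Strict Implicit. Unset Printing Implicit Defensive.
Import Order.TTheory GRing.Theory Num.Theory.
Local Open Scope ring_scope.

Section FNN.
Variables (V : finType) (E : rel V).

Definition acyclic : Prop :=
  forall (u : V) (s : seq V), path E u s -> last u s = u -> s = [::].

Definition is_source (v : V) : bool := [forall u, ~~ E u v].

Definition path_from_source_len (n : nat) (v : V) : bool :=
  [exists u, exists s : n.-tuple V,
     [&& is_source u, path E u (tval s) & last u (tval s) == v]].

(* depth = length of the longest path from a source to v
   (in a dag every path has fewer than #|V| edges) *)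
Definition depth (v : V) : nat :=
  \max_(n < #|V| | path_from_source_len n v) (n : nat).

Definition max_indeg : nat := \max_(v : V) #|[set u | E u v]|.

Variables (R : realType) (p : nat) (inp : 'I_p -> V) (a : V -> R -> R).

Definition act_mu : nat := \max_(v : V) `|Num.ceil `|a v 0| |%N.

Definition norm_x (x : 'I_p -> R) : R := \big[Num.max/0]_(i < p) `|x i|.
Definition norm_b (b : V -> R) : R := \big[Num.max/0]_(v : V) `|b v|.
(* weights w_e, e = uv in E; only the values on edges are ever used *)
Definition norm_w (w : V -> V -> R) : R :=
  \big[Num.max/0]_(uv : V * V | E uv.1 uv.2) `|w uv.1 uv.2|.

Definition fnn_step (x : 'I_p -> R) (w : V -> V -> R) (b : V -> R)
    (g : V -> R) : V -> R :=
  fun v => if [pick i | inp i == v] is Some i then x i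
           else a v (b v + \sum_(u | E u v) g u * w u v).

(* f_{A,v}(x,w,b): iterating the defining equations #|V| times from 0
   gives the unique solution on a dag (values at depth t are final after
   t+1 rounds). *)
Definition fnn_eval (x : 'I_p -> R) (w : V -> V -> R) (b : V -> R) : V -> R :=
  iter #|V| (fnn_step x w b) (fun _ => 0).

End FNN.

(** An input node is bounded by [|x|].  A hidden node
    [v] of depth [t+1] only reads nodes of depth at most [t], so by induction
    its at most [Delta] predecessors are bounded by
    [K := (gamma (|w| + 1))^t (|x| + |b| + 1)]; its pre-activation is then at
    most [|b| + Delta K |w|], and the Lipschitz bound
    [|a_v s| <= mu + lambda |s|] gives
    [mu + lambda (|b| + Delta K |w|) <= gamma (|w| + 1) K]. *)

From HB Require Import structures.
From mathcomp Require Import all_boot all_order all_algebra.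
From mathcomp Require Import reals.
From mathcomp Require Import zify ring lra.
Import Order.TTheory GRing.Theory Num.Theory.
Local Open Scope ring_scope.
Set Implicit Arguments. Unset Strict Implicit. Unset Printing Implicit Defensive.

Section Depth.
Variables (V : finType) (E : rel V).
Hypothesis acyclicE : acyclic E.

Lemma acyclic_path_uniq u s : path E u s -> uniq (u :: s).
Proof.
elim: s u => [|y s IHs] u //= /andP[Euy Eys].
rewrite -[X in _ && X]/(uniq (y :: s)) IHs // andbT; apply/negP => u_in.
have: path E u (y :: s) by rewrite /= Euy.
case: (splitPr u_in) => s1 s2; rewrite cat_path => /andP[Es1 /andP[Elu _]].
have /acyclicE: path E u (rcons s1 u) by rewrite rcons_path Es1.
by rewrite last_rcons => /(_ erefl); case: s1 {Es1 Elu}.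
Qed.

Lemma acyclic_path_size u s : path E u s -> (size s < #|V|)%N.
Proof.
move/acyclic_path_uniq/card_uniqP => card_us.
by have := max_card (mem (u :: s)); rewrite card_us.
Qed.

Lemma path_from_source_lenP n v :
  reflect (exists u s, [&& is_source E u, path E u s, last u s == v & size s == n])
          (path_from_source_len E n v).
Proof.
apply: (iffP existsP) => [[u /existsP[s Hs]] | [u [s /and4P[Su Es sv /eqP sz]]]].
  by exists u, (tval s); rewrite size_tuple eqxx andbT.
exists u; apply/existsP; exists (Tuple (introT eqP sz)); exact/and3P.
Qed.

(* Walking backwards from [v] must stop at a source, since paths are shorter
   than [#|V|]. *)
Lemma exists_path_from_source v :
  exists u s, [&& is_source E u, path E u s & last u s == v].
Proof.
suff: forall k u s, path E u s -> last u s = v -> (#|V| - size s <= k)%N ->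
    exists u s, [&& is_source E u, path E u s & last u s == v].
  by move=> walk; apply: (walk #|V| v [::]) => //; rewrite leq_subr.
elim=> [|k IHk] u s Es sv k_ge.
  by have := acyclic_path_size Es; lia.
have [Su | /forallPn[u' /negPn Eu'u]] := boolP (is_source E u).
  by exists u, s; rewrite Su Es sv eqxx.
apply: (IHk u' (u :: s)) => //=; first by rewrite Eu'u.
by rewrite subnS -ltnS (leq_trans _ k_ge) // ltn_predL subn_gt0 (acyclic_path_size Es).
Qed.

Lemma depth_lt_card v : (depth E v < #|V|)%N.
Proof.
apply: (big_ind (fun n => n < #|V|)%N) => [|m n|//].
- by apply/card_gt0P; exists v.
- by rewrite gtn_max => -> ->.
Qed.

Lemma path_from_source_len_depth v : path_from_source_len E (depth E v) v.
Proof.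
have [u [s /and3P[Su Es sv]]] := exists_path_from_source v.
have sz := acyclic_path_size Es.
have Pv : path_from_source_len E (Ordinal sz) v.
  by apply/path_from_source_lenP; exists u, s; rewrite Su Es sv eqxx.
have [|n Pn max_n] :=
  @eq_bigmax_cond _ (fun n : 'I_#|V| => path_from_source_len E n v) (fun n => n).
  by apply/card_gt0P; exists (Ordinal sz).
suff -> : depth E v = n by [].
by rewrite /depth -max_n; apply: eq_bigl.
Qed.

Lemma depth_edge u v : E u v -> (depth E u < depth E v)%N.
Proof.
move=> Euv.
have /path_from_source_lenP[u0 [s /and4P[Su0 Es su /eqP sz]]] :=
  path_from_source_len_depth u.
have Esv : path E u0 (rcons s v) by rewrite rcons_path Es (eqP su).
have sz' := acyclic_path_size Esv.
have Pv : path_from_source_len E (Ordinal sz') v.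
  by apply/path_from_source_lenP; exists u0, (rcons s v);
     rewrite Su0 Esv last_rcons !eqxx.
have := leq_bigmax_cond (P := fun n : 'I_#|V| => path_from_source_len E n v)
  (F := fun n => n : nat) _ Pv.
by rewrite /= size_rcons sz.
Qed.

End Depth.

Lemma lipschitz_norm_le (R : numDomainType) (f : R -> R) (L s : R) :
  (forall s t, `|f s - f t| <= L * `|s - t|) -> `|f s| <= `|f 0| + L * `|s|.
Proof.
move=> Lf; rewrite -{1}(subrK (f 0) (f s)) addrC.
apply: le_trans (ler_normD _ _) _; rewrite lerD2l.
by have := Lf s 0; rewrite !subr0.
Qed.

Lemma neuron_arith (R : realFieldType) (D L M mu B W K : R) :
  1 <= D -> 1 <= L -> L <= M -> mu <= M -> 0 <= B -> 0 <= W -> B + 1 <= K ->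
  mu + L * (B + D * (K * W)) <= 2 * D * L * M * (W + 1) * K.
Proof.
move=> D1 L1 LM muM B0 W0 BK.
have MK0 : 0 <= M * K by rewrite mulr_ge0 //; lra.
have DLW1 : 1 <= D * L * (W + 1) by rewrite !mulr_ege1 // lerDr.
have mu_LB : mu + L * B <= M * K by nra.
have MK_le : M * K <= D * L * (W + 1) * (M * K) by rewrite ler_peMl.
have LDKW : L * (D * (K * W)) <= D * L * (W + 1) * (M * K).
  rewrite [leRHS](_ : _ = (M * (W + 1)) * (L * (D * K))); last by ring.
  rewrite [leLHS](_ : _ = W * (L * (D * K))); last by ring.
  by apply: ler_wpM2r; [rewrite !mulr_ge0 //; lra | nra].
lra.
Qed.

Section Evaluation.
Variables (R : realType) (V : finType) (E : rel V) (p : nat).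
Variables (inp : 'I_p -> V) (a : V -> R -> R) (lam : nat).
Hypothesis acyclicE : acyclic E.
Hypothesis source_inp : forall v : V, is_source E v <-> exists i : 'I_p, v = inp i.
Hypothesis indeg_ge1 : (1 <= max_indeg E)%N.
Hypothesis lam_gt0 : (0 < lam)%N.
Hypothesis lipschitz_a : forall (v : V) (s t : R), `|a v s - a v t| <= lam%:R * `|s - t|.
Variables (x : 'I_p -> R) (w : V -> V -> R) (b : V -> R).

Local Notation gamma := (2 * max_indeg E * lam * maxn lam (act_mu a))%N.

Lemma norm_a0_le_act_mu v : `|a v 0| <= (act_mu a)%:R.
Proof.
apply: le_trans (ceil_ge _) _.
have ceil_ge0 : 0 <= Num.ceil `|a v 0|.
  by rewrite ceil_ge0 (lt_le_trans _ (normr_ge0 _)) // ltrN10.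
rewrite -(gez0_abs ceil_ge0) -natr_absz ler_nat.
exact: (leq_bigmax (F := fun v => `|Num.ceil `|a v 0| |%N)).
Qed.

Lemma preactivation_norm_le v (g : V -> R) (K : R) :
  0 <= K -> (forall u, E u v -> `|g u| <= K) ->
  `|b v + \sum_(u | E u v) g u * w u v|
    <= norm_b b + (max_indeg E)%:R * (K * norm_w E w).
Proof.
move=> K0 g_le; apply: le_trans (ler_normD _ _) (lerD _ _).
  exact: (le_bigmax 0 (fun v => `|b v|)).
apply: le_trans (ler_norm_sum _ _ _) _.
apply: le_trans (_ : \sum_(u | E u v) K * norm_w E w <= _).
  apply: ler_sum => u Euv; rewrite normrM; apply: ler_pM => //; first exact: g_le.
  exact: (le_bigmax_cond 0 (P := fun uv : V * V => E uv.1 uv.2) (j := (u, v))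
                         (fun uv => `|w uv.1 uv.2|)).
rewrite (eq_bigl (fun u => u \in [set u | E u v])); last by move=> u; rewrite inE.
rewrite sumr_const -[_ *+ #|_|]mulr_natl; apply: ler_wpM2r.
- by apply: mulr_ge0 => //; apply: bigmax_ge_id.
- by rewrite ler_nat; apply: (leq_bigmax (F := fun v => #|[set u | E u v]|)).
Qed.

Lemma neuron_norm_le v (g : V -> R) (K : R) :
  norm_b b + 1 <= K -> (forall u, E u v -> `|g u| <= K) ->
  `|a v (b v + \sum_(u | E u v) g u * w u v)| <= gamma%:R * (norm_w E w + 1) * K.
Proof.
move=> BK g_le.
have B0 : 0 <= norm_b b by apply: bigmax_ge_id.
have W0 : 0 <= norm_w E w by apply: bigmax_ge_id.
have K0 : 0 <= K by lra.
apply: le_trans (lipschitz_norm_le _ (lipschitz_a v)) _.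
apply: le_trans (lerD (norm_a0_le_act_mu v)
  (ler_wpM2l (ler0n _ _) (preactivation_norm_le K0 g_le))) _.
rewrite !natrM; apply: neuron_arith => //.
- by rewrite ler1n.
- by rewrite ler1n.
- by rewrite ler_nat leq_maxl.
- by rewrite ler_nat leq_maxr.
Qed.

Lemma iter_fnn_step_norm_le k v : (depth E v < k)%N ->
  `|iter k (fnn_step E inp a x w b) (fun _ => 0) v|
    <= (gamma%:R * (norm_w E w + 1)) ^+ depth E v * (norm_x x + norm_b b + 1).
Proof.
set H := gamma%:R * _; set S := norm_x x + _ + 1.
have X0 : 0 <= norm_x x by apply: bigmax_ge_id.
have B0 : 0 <= norm_b b by apply: bigmax_ge_id.
have W0 : 0 <= norm_w E w by apply: bigmax_ge_id.
have H1 : 1 <= H.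
  apply: mulr_ege1; last by rewrite lerDr.
  by rewrite ler1n !muln_gt0 indeg_ge1 lam_gt0 (leq_trans lam_gt0 (leq_maxl _ _)).
have HS_mono m n : (m <= n)%N -> H ^+ m * S <= H ^+ n * S.
  by move=> mn; apply: ler_wpM2r; [rewrite /S; lra | exact: ler_weXn2l].
have S_le n : S <= H ^+ n * S by rewrite -[leLHS]mul1r -(expr0 H) HS_mono.
elim: k v => [//|k IHk] v /= dv.
rewrite {1}/fnn_step; case: pickP => [i /eqP <- | not_inp].
  apply: le_trans (S_le _).
  have : `|x i| <= norm_x x by apply: (le_bigmax 0 (fun i => `|x i|)).
  by rewrite /S; lra.
have [u1 Eu1v] : exists u1, E u1 v.
  have /forallPn[u1 /negPn] : ~~ is_source E v.
    by apply/negP => /source_inp[i vi]; move: (not_inp i); rewrite vi eqxx.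
  by exists u1.
move: (depth_edge acyclicE Eu1v) dv; case dvt: (depth E v) => [//|t] _ dv.
rewrite exprS -mulrA; apply: neuron_norm_le => [|u Euv].
  by apply: le_trans (S_le t); rewrite /S; lra.
have := depth_edge acyclicE Euv; rewrite dvt ltnS => dut.
apply: le_trans (HS_mono _ _ dut); apply: IHk.
exact: leq_ltn_trans dut dv.
Qed.
End Evaluation.

Unset Implicit Arguments. Set Strict Implicit.

Theorem lemma6p5 (R : realType) (V : finType) (E : rel V) (p : nat)
    (inp : 'I_p -> V) (a : V -> R -> R) (lam : nat)
    (hE : acyclic E)
    (hinp : injective inp)
    (hsrc : forall v : V, is_source E v <-> exists i : 'I_p, v = inp i)
    (hDelta : (1 <= max_indeg E)%N)
    (hlam : (0 < lam)%N)
    (hlip : forall (v : V) (s t : R), `|a v s - a v t| <= lam%:R * `|s - t|) :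
  let gamma : nat := (2 * max_indeg E * lam * maxn lam (act_mu a))%N in
  forall (x : 'I_p -> R) (w : V -> V -> R) (b : V -> R) (v : V),
    `|fnn_eval E inp a x w b v|
      <= gamma%:R ^+ depth E v * (norm_w E w + 1) ^+ depth E v
         * (norm_x x + norm_b b + 1).
Proof.
move=> gamma x w b v; rewrite -exprMn.
exact: iter_fnn_step_norm_le hE hsrc hDelta hlam hlip _ _ _ _ _ (depth_lt_card E v).
Qed.
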